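(* Let $\mathbb{F}$ be an algebraically closed field with $\mathrm{char}\,\mathbb{F}=2$. Let $\underline{a},\underline{b}\in\mathbf{O}^n$, let $A\in{\rm GL}_n(\mathbb{F})$, and put $\underline{a}'=\underline{a}A$, $\underline{b}'=\underline{b}A$. Then: (a) ${\rm G}_2\underline{a}={\rm G}_2\underline{b}$ if and only if ${\rm G}_2\underline{a}'={\rm G}_2\underline{b}'$; (b) for every $d\ge2$, $f(\underline{a})=f(\underline{b})$ for all $f\in S_n^{(d)}$ if and only if $f(\underline{a}')=f(\underline{b}')$ for all $f\in S_n^{(d)}$; (c) the orbit ${\rm G}_2\underline{a}$ is Zariski closed in $\mathbf{O}^n$ if and only if ${\rm G}_2\underline{a}'$ is Zariski closed in $\mathbf{O}^n$.
   Context: The split octonion algebra $\mathbf{O}$ is the 8-dimensional $\mathbb{F}$-vector space of formal matrices $a=\begin{pmatrix}\alpha&\mathbf{u}\\ \mathbf{v}&\beta\end{pmatrix}$ with $\alpha,\beta\in\mathbb{F}$, $\mathbf{u},\mathbf{v}\in\mathbb{F}^3$, with multiplication $\begin{pmatrix}\alpha&\mathbf{u}\\ \mathbf{v}&\beta\end{pmatrix}\begin{pmatrix}\alpha'&\mathbf{u}'\\ \mathbf{v}'&\beta'\end{pmatrix}=\begin{pmatrix}\alpha\alpha'+\mathbf{u}\cdot\mathbf{v}'&\alpha\mathbf{u}'+\beta'\mathbf{u}-\mathbf{v}\times\mathbf{v}'\\ \alpha'\mathbf{v}+\beta\mathbf{v}'+\mathbf{u}\times\mathbf{u}'&\beta\beta'+\mathbf{v}\cdot\mathbf{u}'\end{pmatrix}$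 (dot product and cross product on $\mathbb{F}^3$). Trace $\mathrm{tr}(a)=\alpha+\beta$, norm $n(a)=\alpha\beta-\mathbf{u}\cdot\mathbf{v}$. ${\rm G}_2=\mathrm{Aut}(\mathbf{O})$ acts diagonally on $\mathbf{O}^n$. ${\rm GL}_n(\mathbb{F})$ acts on $\mathbf{O}^n$ on the right: for $A=(\alpha_{ij})$, $(\underline{a}A)_i=\sum_{k=1}^n\alpha_{ki}a_k$. $S_n$ is the set of polynomial functions on $\mathbf{O}^n$ consisting of $\underline{a}\mapsto n(a_i)$ ($1\le i\le n$, degree $2$) and $\underline{a}\mapsto\mathrm{tr}((\cdots((a_{i_1}a_{i_2})a_{i_3})\cdots)a_{i_k})$ for $k\ge1$, $1\le i_1<\cdots<i_k\le n$ (degree $k$); $S_n^{(d)}$ is its subset of elements of degree at most $d$. *)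

From HB Require Import structures.
From mathcomp Require Import all_boot all_order all_algebra.
Set Implicit Arguments. Unset Strict Implicit. Unset Printing Implicit Defensive.
Import Order.TTheory GRing.Theory Num.Theory.
Local Open Scope ring_scope.

Section Octonions.
Variable F : fieldType.

(* Split octonion [[alpha, u], [v, beta]] with alpha, beta in F, u, v in F^3. *)
Record oct := Oct { o_a : F; o_u : 'rV[F]_3; o_v : 'rV[F]_3; o_b : F }.

Definition i0 : 'I_3 := @Ordinal 3 0 isT.
Definition i1 : 'I_3 := @Ordinal 3 1 isT.
Definition i2 : 'I_3 := @Ordinal 3 2 isT.

Definition dot3 (u v : 'rV[F]_3) : F := \sum_(k < 3) u 0 k * v 0 k.

Definition cross3 (u v : 'rV[F]_3) : 'rV[F]_3 :=
  \row_(k < 3) match nat_of_ord k with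
               | 0 => u 0 i1 * v 0 i2 - u 0 i2 * v 0 i1
               | 1 => u 0 i2 * v 0 i0 - u 0 i0 * v 0 i2
               | _ => u 0 i0 * v 0 i1 - u 0 i1 * v 0 i0
               end.

Definition omul (x y : oct) : oct :=
  Oct (o_a x * o_a y + dot3 (o_u x) (o_v y))
      (o_a x *: o_u y + o_b y *: o_u x - cross3 (o_v x) (o_v y))
      (o_a y *: o_v x + o_b x *: o_v y + cross3 (o_u x) (o_u y))
      (o_b x * o_b y + dot3 (o_v x) (o_u y)).

Definition oadd (x y : oct) : oct :=
  Oct (o_a x + o_a y) (o_u x + o_u y) (o_v x + o_v y) (o_b x + o_b y).

Definition oscale (c : F) (x : oct) : oct :=
  Oct (c * o_a x) (c *: o_u x) (c *: o_v x) (c * o_b x).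

Definition otr (x : oct) : F := o_a x + o_b x.
Definition onorm (x : oct) : F := o_a x * o_b x - dot3 (o_u x) (o_v x).

Definition is_G2 (g : oct -> oct) : Prop :=
  [/\ bijective g,
      (forall x y, g (oadd x y) = oadd (g x) (g y)),
      (forall c x, g (oscale c x) = oscale c (g x)) &
      (forall x y, g (omul x y) = omul (g x) (g y))].

Variable n : nat.

Definition G2act (g : oct -> oct) (a : 'I_n -> oct) : 'I_n -> oct := fun i => g (a i).
Definition G2orbit (a : 'I_n -> oct) : ('I_n -> oct) -> Prop :=
  fun x => exists g, is_G2 g /\ x = G2act g a.

Definition GLact (a : 'I_n -> oct) (A : 'M[F]_n) : 'I_n -> oct := fun i =>
  Oct (\sum_(k < n) A k i * o_a (a k))
      (\sum_(k < n) A k i *: o_u (a k))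
      (\sum_(k < n) A k i *: o_v (a k))
      (\sum_(k < n) A k i * o_b (a k)).

Definition lprod (a : 'I_n -> oct) (i : 'I_n) (s : seq 'I_n) : oct :=
  foldl (fun acc j => omul acc (a j)) (a i) s.

Definition inS (d : nat) (f : ('I_n -> oct) -> F) : Prop :=
  (exists i : 'I_n, (2 <= d)%N /\ f = (fun a => onorm (a i))) \/
  (exists (i : 'I_n) (s : seq 'I_n),
      sorted (fun p q : 'I_n => (p < q)%N) (i :: s) /\ (size (i :: s) <= d)%N /\
      f = (fun a => otr (lprod a i s))).

Inductive polyfun : (('I_n -> oct) -> F) -> Prop :=
  | pf_const c : polyfun (fun _ => c)
  | pf_a i : polyfun (fun x => o_a (x i))
  | pf_b i : polyfun (fun x => o_b (x i))
  | pf_u i j : polyfun (fun x => o_u (x i) 0 j)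
  | pf_v i j : polyfun (fun x => o_v (x i) 0 j)
  | pf_add f g : polyfun f -> polyfun g -> polyfun (fun x => f x + g x)
  | pf_mul f g : polyfun f -> polyfun g -> polyfun (fun x => f x * g x).

Definition zariski_closed (X : ('I_n -> oct) -> Prop) : Prop :=
  exists P : (('I_n -> oct) -> F) -> Prop,
    (forall f, P f -> polyfun f) /\
    (forall x, X x <-> (forall f, P f -> f x = 0)).

End Octonions.

From HB Require Import structures.
From mathcomp Require Import all_boot all_order all_algebra.
From mathcomp Require Import ring zify.
From Stdlib Require Import FunctionalExtensionality.
Set Implicit Arguments. Unset Strict Implicit. Unset Printing Implicit Defensive.
Import GRing.Theory.
Local Open Scope ring_scope.

(* G_2 acts on O by linear maps, so its diagonal action on O^n commutes with
   the right action of GL_n, which is by invertible linear, hence polynomial,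
   maps; this gives (a) and (c).  For (b), right alternativity together with
   y^2 = t(y) y - n(y) gives
     (u y) y = t(y) u y - n(y) u
   and its polarization in y.  Taking traces, t(w) for a word w in the a_i
   with two equal adjacent letters, and the sum t(w) + t(w') for w' obtained
   from w by swapping two adjacent letters, are expressed through t and n of
   single letters and traces of shorter words.  Sorting w and inducting on
   its length, the values of S_n^(d) therefore determine t(w) for every word
   of length at most d, in any order and with repetitions.  Traces of
   products of linear combinations of the a_i follow by multilinearity, and
   norms of such combinations by polarizing n. *)

Section OctonionIdentities.
Variable F : fieldType.
Local Notation O := (oct F).
Implicit Types (x y z u : O) (c : F).

Definition ozero : O := Oct 0 0 0 0.
Definition oone : O := Oct 1 0 0 1.

Lemma ord3P (j : 'I_3) : [\/ j = i0, j = i1 | j = i2].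
Proof.
case: j => [[|[|[|k]]] Hk]; [apply: Or31|apply: Or32|apply: Or33|by []]; exact/val_inj.
Qed.

Lemma dot3E (u v : 'rV[F]_3) :
  dot3 u v = u 0 i0 * v 0 i0 + u 0 i1 * v 0 i1 + u 0 i2 * v 0 i2.
Proof.
rewrite /dot3 !big_ord_recr big_ord0 /= add0r.
by congr (_ * _ + _ * _ + _ * _); congr (_ 0 _); apply/val_inj.
Qed.

Lemma oct_ext x y : o_a x = o_a y -> o_b x = o_b y ->
  (forall j, o_u x 0 j = o_u y 0 j) -> (forall j, o_v x 0 j = o_v y 0 j) -> x = y.
Proof.
case: x => xa xu xv xb; case: y => ya yu yv yb /= -> -> hu hv.
by congr Oct; apply/rowP => j; [apply: hu|apply: hv].
Qed.

Lemma oct_eta x : x = Oct (o_a x) (o_u x) (o_v x) (o_b x).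
Proof. by case: x. Qed.

Ltac oct_ring :=
  apply: oct_ext => /=; rewrite /otr /onorm /= ?dot3E;
  try (let j := fresh "j" in intro j; case: (ord3P j) => ->);
  rewrite /= ?mxE /= ?dot3E /=; ring.

Lemma omulDl x y z : omul (oadd x y) z = oadd (omul x z) (omul y z).
Proof. case: x y z => [????] [????] [????]; oct_ring. Qed.

Lemma omulDr x y z : omul x (oadd y z) = oadd (omul x y) (omul x z).
Proof. case: x y z => [????] [????] [????]; oct_ring. Qed.

Lemma omulZl c x y : omul (oscale c x) y = oscale c (omul x y).
Proof. case: x y => [????] [????]; oct_ring. Qed.

Lemma omulZr c x y : omul x (oscale c y) = oscale c (omul x y).
Proof. case: x y => [????] [????]; oct_ring. Qed.

Lemma omul1l x : omul oone x = x.
Proof. case: x => ????; oct_ring. Qed.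

Lemma oscale0 x : oscale 0 x = ozero.
Proof. case: x => ????; oct_ring. Qed.

Lemma otrD x y : otr (oadd x y) = otr x + otr y.
Proof. by rewrite /otr /= addrACA. Qed.

Lemma otrZ c x : otr (oscale c x) = c * otr x.
Proof. by rewrite /otr /= mulrDr. Qed.

Lemma otr_mulC x y : otr (omul x y) = otr (omul y x).
Proof. case: x y => [????] [????]; rewrite /otr /= !dot3E; ring. Qed.

Lemma onormD x y :
  onorm (oadd x y) = onorm x + onorm y + otr x * otr y - otr (omul x y).
Proof. case: x y => [????] [????]; rewrite /otr /onorm /= !dot3E !mxE; ring. Qed.

Lemma onormZ c x : onorm (oscale c x) = c ^+ 2 * onorm x.
Proof. case: x => ????; rewrite /onorm /= !dot3E !mxE; ring. Qed.

Lemma omul_right_quadratic u y :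
  omul (omul u y) y = oadd (oscale (otr y) (omul u y)) (oscale (- onorm y) u).
Proof. case: u y => [????] [????]; oct_ring. Qed.

Lemma omul_right_quadratic_polar u y z :
  oadd (omul (omul u y) z) (omul (omul u z) y) =
  oadd (oadd (oscale (otr y) (omul u z)) (oscale (otr z) (omul u y)))
       (oscale (- (otr y * otr z - otr (omul z y))) u).
Proof. case: u y z => [????] [????] [????]; oct_ring. Qed.

End OctonionIdentities.

Section TraceWords.
Variable F : fieldType.
Local Notation O := (oct F).
Implicit Types (x y z : O) (c : F) (pre post : seq O).

Definition oprod (xs : seq O) : O := foldl (@omul F) (oone F) xs.
Definition otrw (xs : seq O) : F := otr (oprod xs).

Definition ocomb (I : Type) (r : seq I) (G : I -> O) (c : I -> F) : O :=
  \big[@oadd F/ozero F]_(k <- r) oscale (c k) (G k).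

Lemma oprod_cat (xs ys : seq O) : oprod (xs ++ ys) = foldl (@omul F) (oprod xs) ys.
Proof. exact: foldl_cat. Qed.

Lemma foldl_omulD post x y : foldl (@omul F) (oadd x y) post =
  oadd (foldl (@omul F) x post) (foldl (@omul F) y post).
Proof. by elim: post x y => //= z post IH x y; rewrite omulDl IH. Qed.

Lemma foldl_omulZ post c x :
  foldl (@omul F) (oscale c x) post = oscale c (foldl (@omul F) x post).
Proof. by elim: post x => //= z post IH x; rewrite omulZl IH. Qed.

Lemma otrw1 x : otrw [:: x] = otr x.
Proof. by rewrite /otrw /oprod /= omul1l. Qed.

Lemma otrw2 x y : otrw [:: x; y] = otr (omul x y).
Proof. by rewrite /otrw /oprod /= omul1l. Qed.

Lemma otrw_dup pre y post :
  otrw (pre ++ y :: y :: post) = otr y * otrw (pre ++ y :: post) - onorm y * otrw (pre ++ post).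
Proof.
rewrite /otrw !oprod_cat /= omul_right_quadratic !foldl_omulD !foldl_omulZ.
by rewrite !otrD !otrZ mulNr.
Qed.

Lemma otrw_swap pre y z post :
  otrw (pre ++ y :: z :: post) + otrw (pre ++ z :: y :: post) =
  otr y * otrw (pre ++ z :: post) + otr z * otrw (pre ++ y :: post)
  - (otr y * otr z - otrw [:: z; y]) * otrw (pre ++ post).
Proof.
rewrite otrw2 /otrw !oprod_cat /= -otrD -foldl_omulD omul_right_quadratic_polar.
by rewrite !foldl_omulD !foldl_omulZ !otrD !otrZ mulNr.
Qed.

Lemma otrw_ocomb (I : Type) pre post (r : seq I) (G : I -> O) (c : I -> F) :
  otrw (pre ++ ocomb r G c :: post) = \sum_(k <- r) c k * otrw (pre ++ G k :: post).
Proof.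
pose t x := otrw (pre ++ x :: post).
have tD : {morph t : x y / oadd x y >-> x + y}.
  by move=> x y; rewrite /t /otrw !oprod_cat /= omulDr foldl_omulD otrD.
have tZ c' x : t (oscale c' x) = c' * t x.
  by rewrite /t /otrw !oprod_cat /= omulZr foldl_omulZ otrZ.
have t0 : t (ozero F) = 0 by rewrite -(oscale0 (ozero F)) tZ mul0r.
by rewrite -/(t _) /ocomb (big_morph t tD t0); apply: eq_bigr => k _; rewrite tZ.
Qed.

End TraceWords.

Section AdjacentSwaps.
Variables (T : eqType) (P : seq T -> Prop).
Hypothesis P_swap : forall pre y z post,
  P (pre ++ y :: z :: post) -> P (pre ++ z :: y :: post).

Lemma swap_closed_move pre x mid post :
  P (pre ++ x :: mid ++ post) -> P (pre ++ mid ++ x :: post).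
Proof.
elim: mid pre => //= m mid IH pre /P_swap.
by rewrite -cat_rcons => /IH; rewrite cat_rcons.
Qed.

Lemma swap_closed_perm s t : perm_eq s t -> P s -> P t.
Proof.
suff perm_suffix pre : perm_eq s t -> P (pre ++ s) -> P (pre ++ t) by exact: (perm_suffix [::]).
elim: s t pre => [|x s IH] t pre.
  by rewrite perm_sym => /perm_nilP ->.
move=> hst; have xt : x \in t by rewrite -(perm_mem hst) mem_head.
move: hst; case/splitPr: xt => t1 t2.
rewrite perm_sym -cat1s perm_catCA /= perm_cons perm_sym => hst.
by rewrite -cat_rcons => /(IH _ _ hst); rewrite cat_rcons; apply: swap_closed_move.
Qed.

End AdjacentSwaps.

Lemma not_uniq_perm_dup (T : eqType) (s : seq T) :
  ~~ uniq s -> exists x r, perm_eq s (x :: x :: r).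
Proof.
elim: s => //= y s IH; rewrite negb_and negbK => /orP [ys | /IH [x [r hr]]].
  by exists y, (rem y s); rewrite perm_cons perm_to_rem.
exists x, (y :: r); rewrite -(perm_cons y) in hr.
by rewrite (perm_trans hr) // (perm_catCA [:: y] [:: x; x] r).
Qed.

Lemma sorted_ord_ltn n (s : seq 'I_n) :
  sorted (fun p q : 'I_n => (p < q)%N) s =
  uniq s && sorted (fun p q : 'I_n => (p <= q)%N) s.
Proof.
by have := ltn_sorted_uniq_leq (map val s); rewrite !sorted_map (map_inj_uniq val_inj).
Qed.

Section GLaction.
Variables (F : fieldType) (n : nat).
Implicit Types (A B : 'M[F]_n) (x : 'I_n -> oct F).

Lemma sum_scale_mulmx (V : lmodType F) A B i (v : 'I_n -> V) :
  \sum_(k < n) B k i *: \sum_(l < n) A l k *: v l = \sum_(l < n) (A *m B) l i *: v l.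
Proof.
under eq_bigr do rewrite scaler_sumr.
rewrite exchange_big /=; apply: eq_bigr => l _.
by rewrite mxE scaler_suml; apply: eq_bigr => k _; rewrite scalerA mulrC.
Qed.

Lemma sum_scale_id (V : lmodType F) i (v : 'I_n -> V) :
  \sum_(k < n) (1%:M : 'M[F]_n) k i *: v k = v i.
Proof.
rewrite (bigD1 i) //= big1 => [|k hk]; first by rewrite mxE eqxx scale1r addr0.
by rewrite mxE (negbTE hk) scale0r.
Qed.

Lemma GLact_mul x A B : GLact (GLact x A) B = GLact x (A *m B).
Proof.
apply: functional_extensionality => i; rewrite /GLact /=.
by rewrite !(sum_scale_mulmx (V := F^o)) !sum_scale_mulmx.
Qed.

Lemma GLact1 x : GLact x 1%:M = x.
Proof.
apply: functional_extensionality => i; rewrite /GLact /=.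
by rewrite !(sum_scale_id (V := F^o)) !sum_scale_id -oct_eta.
Qed.

Lemma GLactK x A : A \in unitmx -> GLact (GLact x A) (invmx A) = x.
Proof. by move=> hA; rewrite GLact_mul mulmxV // GLact1. Qed.

Lemma GLactVK x A : A \in unitmx -> GLact (GLact x (invmx A)) A = x.
Proof. by move=> hA; rewrite GLact_mul mulVmx // GLact1. Qed.

Lemma GLact_ocomb x A i : GLact x A i = ocomb (index_enum 'I_n) x (fun k => A k i).
Proof.
rewrite [RHS]oct_eta /GLact /ocomb; congr Oct.
- by rewrite (big_morph (@o_a F) (id1 := 0) (op1 := +%R)).
- by rewrite (big_morph (@o_u F) (id1 := 0) (op1 := +%R)).
- by rewrite (big_morph (@o_v F) (id1 := 0) (op1 := +%R)).
- by rewrite (big_morph (@o_b F) (id1 := 0) (op1 := +%R)).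
Qed.

End GLaction.

Section Invariants.
Variables (F : fieldType) (n : nat) (a b : 'I_n -> oct F) (d : nat).
Hypothesis d_ge2 : (2 <= d)%N.
Hypothesis inS_eq : forall f, inS d f -> f a = f b.

Definition tr_agree (w : seq 'I_n) : Prop := otrw (map a w) = otrw (map b w).

Lemma lprod_oprod (x : 'I_n -> oct F) i s : lprod x i s = oprod (map x (i :: s)).
Proof.
rewrite /lprod /oprod /= omul1l.
by elim: s (x i) => //= j s IH y; rewrite IH.
Qed.

Lemma tr_agree_sorted s : sorted (fun p q : 'I_n => (p < q)%N) s ->
  (size s <= d)%N -> tr_agree s.
Proof.
case: s => [|i s] // hs hsz; rewrite /tr_agree /otrw -!lprod_oprod.
by apply: (inS_eq (f := fun x => otr (lprod x i s))); right; exists i, s.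
Qed.

Lemma onorm_agree i : onorm (a i) = onorm (b i).
Proof. by apply: (inS_eq (f := fun x => onorm (x i))); left; exists i. Qed.

Lemma otr_agree i : otr (a i) = otr (b i).
Proof.
have : tr_agree [:: i] by apply: tr_agree_sorted => //; exact: ltnW d_ge2.
by rewrite /tr_agree /= !otrw1.
Qed.

Lemma tr_agree_dup i w : tr_agree (i :: w) -> tr_agree w -> tr_agree (i :: i :: w).
Proof.
rewrite /tr_agree /= => hi hw.
have := otrw_dup [::] (a i) (map a w); have := otrw_dup [::] (b i) (map b w).
by rewrite /= => -> ->; rewrite hi hw otr_agree onorm_agree.
Qed.

Lemma tr_agree2 i j : tr_agree [:: i; j].
Proof.
case: (ltngtP i j) => [ij | ji | /val_inj <-].
- by apply: tr_agree_sorted => //=; rewrite ij.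
- rewrite /tr_agree /= !otrw2 otr_mulC [otr (omul (b i) _)]otr_mulC -!otrw2.
  by apply: (tr_agree_sorted (s := [:: j; i])) => //=; rewrite ji.
- by apply: tr_agree_dup => //; apply: tr_agree_sorted => //; exact: ltnW d_ge2.
Qed.

Lemma tr_agree_swap pre i j post :
  tr_agree (pre ++ j :: post) -> tr_agree (pre ++ i :: post) -> tr_agree (pre ++ post) ->
  tr_agree (pre ++ i :: j :: post) -> tr_agree (pre ++ j :: i :: post).
Proof.
rewrite /tr_agree !map_cat /= => hj hi h hij.
have := otrw_swap (map a pre) (a i) (a j) (map a post).
have := otrw_swap (map b pre) (b i) (b j) (map b post).
have := tr_agree2 j i; rewrite /tr_agree /= => hji.
by rewrite hij hj hi h hji !otr_agree => <- /addrI.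
Qed.

Lemma tr_agree_all w : (size w <= d)%N -> tr_agree w.
Proof.
have [k] := ubnP (size w); elim: k w => // k IH w; rewrite ltnS => hwk hwd.
have shorter w' : (size w' < size w)%N -> tr_agree w'.
  by move=> hw'; apply: IH; lia.
pose P w' := size w' = size w -> tr_agree w'.
have P_swap pre i j post : P (pre ++ i :: j :: post) -> P (pre ++ j :: i :: post).
  rewrite /P !size_cat /= => hij hsz; apply: tr_agree_swap;
    try (apply: shorter; rewrite -hsz size_cat /=; lia).
  by apply: hij; rewrite -hsz.
have perm_agree w' : perm_eq w' w -> tr_agree w' -> tr_agree w.
  by move=> hw' hagree; apply: (swap_closed_perm P_swap hw') => //; rewrite (perm_size hw').
case/boolP: (uniq w) => [uw | /not_uniq_perm_dup [i [r hr]]].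
- pose le := fun p q : 'I_n => (p <= q)%N.
  apply: (perm_agree (sort le w)); first by rewrite perm_sort.
  apply: tr_agree_sorted; last by rewrite size_sort.
  by rewrite sorted_ord_ltn sort_uniq uw sort_sorted //; move=> p q; apply: leq_total.
- rewrite perm_sym in hr; apply: (perm_agree _ hr).
  by apply: tr_agree_dup; apply: shorter; rewrite -(perm_size hr) /=; lia.
Qed.

Lemma otrw_ocomb_agree (r : seq 'I_n) (L : seq ('I_n -> F)) (w : seq 'I_n) :
  (size w + size L <= d)%N ->
  otrw (map a w ++ map (ocomb r a) L) = otrw (map b w ++ map (ocomb r b) L).
Proof.
elim: L w => [|c L IH] w hsz; first by rewrite !cats0; apply: tr_agree_all; lia.
rewrite /= !otrw_ocomb; apply: eq_bigr => k _; congr (_ * _).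
by rewrite -!cat_rcons -!map_rcons; apply: IH; rewrite size_rcons; move: hsz => /=; lia.
Qed.

Lemma onorm_ocomb_agree (r : seq 'I_n) c : onorm (ocomb r a c) = onorm (ocomb r b c).
Proof.
elim: r => [|k r IH]; first by rewrite /ocomb !big_nil.
rewrite /ocomb !big_cons -!/(ocomb _ _ _) !onormD !onormZ IH !otrZ !omulZl !otrZ.
have trc := otrw_ocomb_agree r (L := [:: c]) (w := [::]) (ltnW d_ge2).
have trkc := otrw_ocomb_agree r (L := [:: c]) (w := [:: k]) d_ge2.
by move: trc trkc; rewrite /= !otrw1 !otrw2 otr_agree onorm_agree => -> ->.
Qed.

Lemma inS_GLact A f : inS d f -> f (GLact a A) = f (GLact b A).
Proof.
case=> [[i [_ ->]] | [i [s [_ [hsz ->]]]]] /=.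
  by rewrite !GLact_ocomb onorm_ocomb_agree.
have cols x : map (GLact x A) (i :: s) =
    map (ocomb (index_enum 'I_n) x) (map (fun j k => A k j) (i :: s)).
  by rewrite -map_comp; apply: eq_map => j; rewrite /= GLact_ocomb.
rewrite !lprod_oprod !cols.
have := otrw_ocomb_agree (index_enum 'I_n) (L := map (fun j k => A k j) (i :: s)) (w := [::]).
by rewrite /otrw size_map; apply.
Qed.

End Invariants.

Section G2Orbits.
Variables (F : fieldType) (n : nat).
Local Notation O := (oct F).
Implicit Types (g h : O -> O) (x y z : 'I_n -> O) (A : 'M[F]_n).

Lemma G2_id : is_G2 (@id O).
Proof. by split => //; exists id. Qed.

Lemma G2_comp g h : is_G2 g -> is_G2 h -> is_G2 (g \o h).
Proof.
case=> gbij gD gZ gM [hbij hD hZ hM]; split.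
- exact: bij_comp.
- by move=> u v; rewrite /= hD gD.
- by move=> c u; rewrite /= hZ gZ.
- by move=> u v; rewrite /= hM gM.
Qed.

Lemma G2_inv g : is_G2 g -> exists g', [/\ is_G2 g', cancel g g' & cancel g' g].
Proof.
case=> gbij gD gZ gM; have [g' gK g'K] := gbij; have ginj := bij_inj gbij.
exists g'; split => //; split.
- by exists g.
- by move=> u v; apply: ginj; rewrite gD !g'K.
- by move=> c u; apply: ginj; rewrite gZ !g'K.
- by move=> u v; apply: ginj; rewrite gM !g'K.
Qed.

Lemma G2_ocomb g (r : seq 'I_n) x c : is_G2 g ->
  g (ocomb r x c) = ocomb r (g \o x) c.
Proof.
case=> _ gD gZ _; have g0 : g (ozero F) = ozero F.
  by rewrite -{1}(oscale0 (ozero F)) gZ oscale0.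
by rewrite /ocomb (big_morph g gD g0); apply: eq_bigr => k _; apply: gZ.
Qed.

Lemma GLact_G2act g x A : is_G2 g -> GLact (G2act g x) A = G2act g (GLact x A).
Proof.
move=> hg; apply: functional_extensionality => i.
by rewrite /G2act !GLact_ocomb G2_ocomb.
Qed.

Lemma G2orbit_eq_iff x y :
  (forall z, G2orbit x z <-> G2orbit y z) <-> exists g, is_G2 g /\ y = G2act g x.
Proof.
split => [xy | [g [hg ->]] z].
  by apply/xy; exists id; split; [exact: G2_id|].
split => -[h [hh ->]].
- have [g' [hg' gK _]] := G2_inv hg.
  exists (h \o g'); split; first exact: G2_comp.
  by apply: functional_extensionality => i; rewrite /G2act /= gK.
- by exists (h \o g); split; first exact: G2_comp.
Qed.

Lemma G2orbit_eq_GLact x y A :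
  (forall z, G2orbit x z <-> G2orbit y z) ->
  forall z, G2orbit (GLact x A) z <-> G2orbit (GLact y A) z.
Proof.
rewrite !G2orbit_eq_iff => -[g [hg ->]].
by exists g; split => //; apply: GLact_G2act.
Qed.

Lemma G2orbit_GLact x A z : A \in unitmx ->
  G2orbit (GLact x A) z <-> G2orbit x (GLact z (invmx A)).
Proof.
move=> hA; split => -[g [hg e]]; exists g; split => //.
- by rewrite e -GLact_G2act // GLactK.
- by rewrite -GLact_G2act // -e GLactVK.
Qed.

End G2Orbits.

Section ZariskiClosed.
Variables (F : fieldType) (n : nat).
Local Notation O := (oct F).
Implicit Types (f : ('I_n -> O) -> F) (A : 'M[F]_n).

Lemma polyfun_lincomb (coord : O -> F) (r : seq 'I_n) (c : 'I_n -> F) :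
  (forall k, polyfun (fun x : 'I_n -> O => coord (x k))) ->
  polyfun (fun x : 'I_n -> O => \sum_(k <- r) c k * coord (x k)).
Proof.
move=> hcoord; elim: r => [|k r IH].
  have -> : (fun x : 'I_n -> O => \sum_(j <- [::]) c j * coord (x j)) = fun=> 0.
    by apply: functional_extensionality => x; rewrite big_nil.
  exact: pf_const.
have -> : (fun x : 'I_n -> O => \sum_(j <- k :: r) c j * coord (x j)) =
          fun x => c k * coord (x k) + \sum_(j <- r) c j * coord (x j).
  by apply: functional_extensionality => x; rewrite big_cons.
by apply: pf_add => //; apply: pf_mul; [apply: pf_const|].
Qed.

Lemma polyfun_GLact A f : polyfun f -> polyfun (fun x => f (GLact x A)).
Proof.
have row_coord (w : 'I_n -> 'rV[F]_3) (i : 'I_n) j :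
    (\sum_(k < n) A k i *: w k) 0 j = \sum_(k < n) A k i * w k 0 j.
  by rewrite summxE; apply: eq_bigr => k _; rewrite mxE.
elim=> [c|i|i|i j|i j|f1 f2 _ IH1 _ IH2|f1 f2 _ IH1 _ IH2] /=.
- exact: pf_const.
- by apply: (@polyfun_lincomb (@o_a F) _ (A^~ i)) => k; apply: pf_a.
- by apply: (@polyfun_lincomb (@o_b F) _ (A^~ i)) => k; apply: pf_b.
- rewrite (functional_extensionality _ _ (fun x => row_coord (fun k => o_u (x k)) i j)).
  by apply: (@polyfun_lincomb (fun o => o_u o 0 j) _ (A^~ i)) => k; apply: pf_u.
- rewrite (functional_extensionality _ _ (fun x => row_coord (fun k => o_v (x k)) i j)).
  by apply: (@polyfun_lincomb (fun o => o_v o 0 j) _ (A^~ i)) => k; apply: pf_v.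
- exact: pf_add.
- exact: pf_mul.
Qed.

Lemma zariski_closed_preimage A (X Y : ('I_n -> O) -> Prop) :
  (forall z, Y z <-> X (GLact z A)) -> zariski_closed X -> zariski_closed Y.
Proof.
move=> YX [P [hP hX]].
exists (fun f' => exists2 f, P f & f' = fun z => f (GLact z A)); split.
  by move=> _ [f pf ->]; apply/polyfun_GLact/hP.
move=> z; apply: iff_trans (YX z) _; apply: iff_trans (hX _) _.
split => [H _ [f pf ->] | H f pf]; first exact: H.
exact: (H _ (ex_intro2 _ _ f pf erefl)).
Qed.

Lemma zariski_closed_G2orbit_GLact (x : 'I_n -> O) A : A \in unitmx ->
  zariski_closed (G2orbit x) -> zariski_closed (G2orbit (GLact x A)).
Proof.
by move=> hA; apply: (zariski_closed_preimage (A := invmx A)) => z; apply: G2orbit_GLact.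
Qed.

End ZariskiClosed.

Theorem lemma7p2 (F : closedFieldType) (hF : 2%N \in [pchar F]) (n : nat)
    (a b : 'I_n -> oct F) (A : 'M[F]_n) (hA : A \in unitmx) :
  [/\ (forall x, G2orbit a x <-> G2orbit b x) <->
        (forall x, G2orbit (GLact a A) x <-> G2orbit (GLact b A) x),
      (forall d : nat, (2 <= d)%N ->
        (forall f, inS d f -> f a = f b) <->
        (forall f, inS d f -> f (GLact a A) = f (GLact b A))) &
      zariski_closed (G2orbit a) <-> zariski_closed (G2orbit (GLact a A))].
Proof.
have hAV : invmx A \in unitmx by rewrite unitmx_inv.
split.
- split; first exact: G2orbit_eq_GLact.
  by move/(G2orbit_eq_GLact (invmx A)); rewrite !GLactK.
- move=> d hd; split => H f hf; first exact: (inS_GLact hd H A hf).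
  by have := inS_GLact hd H (invmx A) hf; rewrite !GLactK.
- split; first exact: zariski_closed_G2orbit_GLact.
  by move/(zariski_closed_G2orbit_GLact hAV); rewrite GLactK.
Qed.
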